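(* Let $G$ be a maximal $3$-$\gamma_{c}$-vertex critical graph of order $n$, with independence number $\alpha$ and clique number $\omega$. Then $\alpha\cdot\omega\leq\lfloor\frac{n-1}{2}\rfloor\cdot\lceil\frac{n-1}{2}\rceil$; moreover, $\alpha\cdot\omega=(\frac{n-1}{2})^{2}$ if and only if $G\in\mathcal{G}_{1}(l)$ for some $l\geq 2$.
   Context: All graphs are finite, simple and connected. A set $D\subseteq V(G)$ is a connected dominating set of $G$ if every vertex of $G$ is in $D$ or adjacent to a vertex of $D$, and $G[D]$ is connected; $\gamma_{c}(G)$ is the minimum cardinality of such a set. $G$ is $k$-$\gamma_{c}$-edge critical if $\gamma_{c}(G)=k$ and $\gamma_{c}(G+uv)<k$ for every pair of non-adjacent vertices $u,v$. A $2$-connected graph $G$ is $k$-$\gamma_{c}$-vertex critical if $\gamma_{c}(G)=k$ and $\gamma_{c}(G-v)<k$ for every $v\in V(G)$. $G$ is maximal $k$-$\gamma_{c}$-vertex critical if it is both $k$-$\gamma_{c}$-edge critical and $k$-$\gamma_{c}$-vertex critical. For $l\geq 2$, the class $\mathcal{G}_{1}(l)$ consists of the graphs on vertex set $\{v,q_{1},\dots,q_{l},z_{1},\dots,z_{l}\}$ whose edges are: $vz_{i}$ for all $i$; $q_{i}q_{j}$ for all $i\neq j$; and $z_{i}q_{j}$ for all $i\neq j$. *)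

From mathcomp Require Import all_boot.
Set Implicit Arguments.
Unset Strict Implicit.
Unset Printing Implicit Defensive.

(* Graphs: a subgraph of a simple graph is given by a vertex set V : {set T}
   together with a symmetric irreflexive adjacency relation e : rel T;
   the graph is the induced graph e restricted to V. *)

Definition simple_graph (T : finType) (e : rel T) : Prop :=
  symmetric e /\ irreflexive e.

Definition connectedb (T : finType) (e : rel T) (S : {set T}) : bool :=
  [forall x in S, forall y in S,
     connect [rel a b | [&& e a b, a \in S & b \in S]] x y].

Definition dominatingb (T : finType) (V : {set T}) (e : rel T) (D : {set T}) : bool :=
  (D \subset V) && [forall x in V, (x \in D) || [exists y in D, e x y]].

Definition is_cds (T : finType) (V : {set T}) (e : rel T) (D : {set T}) : bool :=
  dominatingb V e D && connectedb e D.

(* connected domination number (default #|T|.+1 if no cds exists,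
   i.e. if the graph is disconnected) *)
Definition gamma_c (T : finType) (V : {set T}) (e : rel T) : nat :=
  \big[minn/#|T|.+1]_(D : {set T} | is_cds V e D) #|D|.

Definition add_edge (T : finType) (e : rel T) (u v : T) : rel T :=
  [rel x y | [|| e x y, (x == u) && (y == v) | (x == v) && (y == u)]].

Definition two_connected (T : finType) (V : {set T}) (e : rel T) : Prop :=
  2 < #|V| /\ connectedb e V /\ forall v, v \in V -> connectedb e (V :\ v).

Definition edge_critical (T : finType) (V : {set T}) (e : rel T) (k : nat) : Prop :=
  gamma_c V e = k /\
  forall u v, u \in V -> v \in V -> u != v -> ~~ e u v ->
    gamma_c V (add_edge e u v) < k.

Definition vertex_critical (T : finType) (V : {set T}) (e : rel T) (k : nat) : Prop :=
  two_connected V e /\ gamma_c V e = k /\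
  forall v, v \in V -> gamma_c (V :\ v) e < k.

Definition maximal_vertex_critical (T : finType) (V : {set T}) (e : rel T) (k : nat) : Prop :=
  edge_critical V e k /\ vertex_critical V e k.

Definition independentb (T : finType) (e : rel T) (S : {set T}) : bool :=
  [forall x in S, forall y in S, ~~ e x y].

Definition cliqueb (T : finType) (e : rel T) (S : {set T}) : bool :=
  [forall x in S, forall y in S, (x != y) ==> e x y].

Definition independence_number (T : finType) (e : rel T) : nat :=
  \max_(S : {set T} | independentb e S) #|S|.

Definition clique_number (T : finType) (e : rel T) : nat :=
  \max_(S : {set T} | cliqueb e S) #|S|.

(* The class G_1(l): vertex v = None, q_i = Some (inl i), z_i = Some (inr i). *)
Definition G1_vertex (l : nat) : finType := option ('I_l + 'I_l)%type.

Definition G1_rel (l : nat) : rel (G1_vertex l) :=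
  fun a b =>
    match a, b with
    | None, Some (inr _) => true
    | Some (inr _), None => true
    | Some (inl i), Some (inl j) => i != j
    | Some (inr i), Some (inl j) => i != j
    | Some (inl j), Some (inr i) => i != j
    | _, _ => false
    end.

Definition in_G1 (T : finType) (e : rel T) (l : nat) : Prop :=
  exists f : T -> G1_vertex l, bijective f /\ forall x y, e x y = G1_rel (f x) (f y).

From mathcomp Require Import all_boot zify.

Set Implicit Arguments.
Unset Strict Implicit.
Unset Printing Implicit Defensive.

(* Since gamma_c = 3, no vertex and no edge dominates G; by vertex
   criticality each G - v is dominated by an edge, whose ends are then both
   non-adjacent to v.  Applied to vertices v of a clique K, this shows that an
   independent set I and K cannot cover all vertices but one when they meet,
   nor all vertices when they are disjoint; so alpha + omega <= n - 1 and
   alpha * omega <= floor((n-1)/2) * ceil((n-1)/2) by AM-GM, with equality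
   only if alpha = omega = l and n = 2l + 1.  In that case a maximum clique K
   can be taken disjoint from a maximum independent set I (if they meet, edge
   criticality produces another one); the remaining vertex u sees all of I
   and none of K, and the dominating edge u z_v of G - v, for v in K, matches
   K with I so that z_v is adjacent to K exactly off v: this is G_1(l). *)

Lemma four_mul_le_sqr_add a b : 4 * (a * b) <= (a + b) ^ 2.
Proof.
by case: (leqP a b) => [/subnKC <- | /ltnW/subnKC <-]; nia.
Qed.

Lemma mul_le_half_uphalf a b m : a + b <= m -> a * b <= m./2 * uphalf m.
Proof.
move=> abm; have := leq_mul abm abm; have := four_mul_le_sqr_add a b.
rewrite uphalf_half -{1 2 3}(odd_double_half m) -!muln2.
by case: (odd m) => /=; nia.
Qed.

Lemma four_mul_eq_sqr a b m : a + b <= m -> 4 * (a * b) = m ^ 2 -> a = b /\ m = a + a.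
Proof. by move=> abm; have := leq_mul abm abm; nia. Qed.

Lemma setCU_cover (T : finType) (A B S : {set T}) x :
  ~: (A :|: B) = S -> [|| x \in A, x \in B | x \in S].
Proof. by move=> <-; rewrite !inE; case: (x \in A); case: (x \in B). Qed.

Section PairDomination.
Variable T : finType.
Implicit Types (r : rel T) (V D S : {set T}) (a b u v x y : T).

Definition adj_or_eq r a b := (a == b) || r a b.

Definition dominates2 r a b x := [|| x == a, x == b, r x a | r x b].

Definition cd_pair V r a b : Prop :=
  [/\ a \in V, b \in V, adj_or_eq r a b & {in V, forall x, dominates2 r a b x}].

Lemma dominates2C r a b x : dominates2 r a b x = dominates2 r b a x.
Proof. by rewrite /dominates2 orbCA [r x a || _]orbC. Qed.

Lemma adj_or_eqC r a b : symmetric r -> adj_or_eq r a b = adj_or_eq r b a.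
Proof. by move=> rs; rewrite /adj_or_eq eq_sym rs. Qed.

Lemma cd_pairC V r a b : symmetric r -> cd_pair V r a b -> cd_pair V r b a.
Proof.
move=> rs [aV bV ab dom]; split; rewrite 1?adj_or_eqC //.
by move=> x /dom; rewrite dominates2C.
Qed.

Lemma cd_pair_cds V r a b : symmetric r -> cd_pair V r a b -> is_cds V r [set a; b].
Proof.
move=> rs [aV bV ab dom]; apply/andP; split; [apply/andP; split|].
- by apply/subsetP=> x; rewrite !inE => /orP[]/eqP->.
- apply/forall_inP=> x /dom /or4P[/eqP->|/eqP->|xa|xb]; rewrite ?inE ?eqxx ?orbT //;
    apply/orP; right; apply/existsP; [exists a | exists b].
    by rewrite !inE eqxx xa.
  by rewrite !inE eqxx xb orbT.
rewrite /connectedb; set R := [rel _ _ | _].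
have [Rab Rba] : connect R a b /\ connect R b a.
  case/orP: ab => [/eqP<-|rab]; first by rewrite connect0.
  by split; apply: connect1; rewrite /= ?rab 1?rs ?rab !inE !eqxx ?orbT.
apply/forall_inP=> x; rewrite !inE => /orP[]/eqP->; apply/forall_inP=> y;
  by rewrite !inE => /orP[]/eqP->; rewrite ?connect0.
Qed.

Lemma cds_pair_cd_pair V r a b : irreflexive r -> is_cds V r [set a; b] -> cd_pair V r a b.
Proof.
move=> rirr /andP[/andP[/subsetP abV /forall_inP dom] /forall_inP conn].
split; [exact/abV/set21 | exact/abV/set22 | |].
- rewrite /adj_or_eq; case: eqVneq => //= neq_ab.
  have /connectP[[|z p] /= ] := forall_inP (conn a (set21 a b)) b (set22 a b).
    by move=> _ eq_ab; rewrite eq_ab eqxx in neq_ab.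
  case/andP=> /and3P[raz _]; rewrite !inE => /orP[/eqP za|/eqP <-] // _ _.
  by rewrite za rirr in raz.
- move=> x /dom /orP[|/existsP[y /andP[]]]; rewrite !inE /dominates2.
    by case/orP=> ->; rewrite ?orbT.
  by case/orP=> /eqP-> ->; rewrite ?orbT.
Qed.

Lemma card_le2_pair S : 0 < #|S| -> #|S| <= 2 -> exists a b, S = [set a; b].
Proof.
move=> S_gt0; rewrite leq_eqVlt; case/orP=> [/cards2P[a [b [_ ->]]] | S_lt2].
  by exists a, b.
have /cards1P[a ->] : #|S| == 1 by lia.
by exists a, a; rewrite setUid.
Qed.

Lemma cds_card_gt0 V r D : V != set0 -> is_cds V r D -> 0 < #|D|.
Proof.
move=> /set0Pn[x xV] /andP[/andP[_ /forall_inP domD] _]; rewrite card_gt0.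
by case/orP: (domD x xV) => [xD|/existsP[y /andP[yD _]]]; apply/set0Pn; eexists; eauto.
Qed.

Lemma gamma_c_ltP V r k : k <= #|T|.+1 ->
  reflect (exists2 D, is_cds V r D & #|D| < k) (gamma_c V r < k).
Proof.
move=> k_le; apply: (iffP idP) => [lt_k|[D cdsD ltDk]].
  have /existsP[D /andP[cdsD ltDk]] : [exists D, is_cds V r D && (#|D| < k)].
    apply: contraTT lt_k => /existsPn no_cds; rewrite -leqNgt.
    apply: (big_ind (leq k)) => // [m n km kn | D cdsD]; first by rewrite leq_min km kn.
    by have := no_cds D; rewrite cdsD -leqNgt.
  by exists D.
apply: leq_ltn_trans ltDk; rewrite /gamma_c.
elim: (index_enum _) (mem_index_enum D) => // D' s IHs; rewrite big_cons inE.
case/orP=> [/eqP<-|/IHs le_s]; first by rewrite cdsD geq_minl.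
by case: ifP => // _; rewrite geq_min le_s orbT.
Qed.

Lemma gamma_c_lt3P V r : symmetric r -> irreflexive r -> 1 < #|T| -> V != set0 ->
  gamma_c V r < 3 <-> exists a b, cd_pair V r a b.
Proof.
move=> rs rirr T_gt1 V0; have le3 : 3 <= #|T|.+1 by [].
split=> [/(gamma_c_ltP _ _ le3)[D cdsD D_lt3] | [a [b ab]]].
  have [a [b Dab]] := card_le2_pair (cds_card_gt0 V0 cdsD) D_lt3.
  by exists a, b; apply: cds_pair_cd_pair; rewrite -?Dab.
apply/(gamma_c_ltP _ _ le3); exists [set a; b]; first exact: cd_pair_cds.
by rewrite cards2; case: (a != b).
Qed.

End PairDomination.

Section Graphs.
Variables (T : finType) (e : rel T).
Implicit Types (S : {set T}) (a b u v x y : T).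

Lemma add_edge_sym u v : symmetric e -> symmetric (add_edge e u v).
Proof.
move=> es x y; rewrite /add_edge /= es; congr (_ || _).
by rewrite orbC; congr (_ || _); apply: andbC.
Qed.

Lemma add_edge_irr u v : irreflexive e -> u != v -> irreflexive (add_edge e u v).
Proof.
move=> eirr uv x; rewrite /add_edge /= eirr /=.
by apply/negP=> /orP[]/andP[/eqP-> /eqP vu]; rewrite vu eqxx in uv.
Qed.

Lemma adj_or_eq_add_edge u v a b : a != u -> a != v ->
  adj_or_eq (add_edge e u v) a b = adj_or_eq e a b.
Proof. by move=> /negbTE au /negbTE av; rewrite /adj_or_eq /add_edge /= au av orbF. Qed.

Lemma dominates2_add_edge u v a b x : a != u -> a != v ->
  dominates2 (add_edge e u v) a b x =
  dominates2 e a b x || [|| (b == v) && (x == u) | (b == u) && (x == v)].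
Proof.
move=> /negbTE au /negbTE av; rewrite /dominates2 /add_edge /= au av !andbF !orbF.
by rewrite [(x == u) && _]andbC [(x == v) && _]andbC !orbA.
Qed.

Lemma connected_neighbour S v x : connectedb e S -> v \in S -> x \in S -> x != v ->
  exists y, e v y.
Proof.
move=> /forall_inP/(_ v) conn vS xS xv.
have /connectP[[|y p] /=] := forall_inP (conn vS) x xS.
  by move=> _ xv'; rewrite xv' eqxx in xv.
by case/andP=> /andP[evy _] _ _; exists y.
Qed.

Lemma independentP S : reflect {in S &, forall x y, ~~ e x y} (independentb e S).
Proof.
apply: (iffP forall_inP) => [ind x y xS yS | ind x xS].
  exact: (forall_inP (ind x xS)).
by apply/forall_inP => y; apply: ind.
Qed.

Lemma cliqueP S : reflect {in S &, forall x y, x != y -> e x y} (cliqueb e S).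
Proof.
apply: (iffP forall_inP) => [cl x y xS yS | cl x xS].
  exact/implyP/(forall_inP (cl x xS)).
by apply/forall_inP => y yS; apply/implyP; apply: cl.
Qed.

Lemma independent_card_le S : independentb e S -> #|S| <= independence_number e.
Proof. exact: (@leq_bigmax_cond _ (independentb e) (fun S => #|S|)). Qed.

Lemma max_independent_set : exists2 S, independentb e S & #|S| = independence_number e.
Proof.
have [|S] := @eq_bigmax_cond _ (independentb e) (fun S => #|S|); last by exists S.
by apply/card_gt0P; exists set0; apply/forall_inP=> x; rewrite inE.
Qed.

Lemma clique_card_le S : cliqueb e S -> #|S| <= clique_number e.
Proof. exact: (@leq_bigmax_cond _ (cliqueb e) (fun S => #|S|)). Qed.

Lemma max_clique : exists2 S, cliqueb e S & #|S| = clique_number e.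
Proof.
have [|S] := @eq_bigmax_cond _ (cliqueb e) (fun S => #|S|); last by exists S.
by apply/card_gt0P; exists set0; apply/forall_inP=> x; rewrite inE.
Qed.

End Graphs.

Lemma card_G1_vertex l : #|G1_vertex l| = l + l + 1.
Proof. by rewrite card_option card_sum card_ord addn1. Qed.

Lemma in_G1_labelling (T : finType) (e : rel T) l (g : G1_vertex l -> T) :
  injective g -> #|T| = l + l + 1 -> (forall p q, e (g p) (g q) = G1_rel p q) -> in_G1 e l.
Proof.
move=> g_inj cardT g_rel.
have [f gK fK] : bijective g.
  by apply: inj_card_bij; rewrite // card_G1_vertex cardT.
by exists f; split; [exists g | move=> x y; rewrite -g_rel !fK].
Qed.

Lemma in_G1_indep_clique (T : finType) (e : rel T) l : in_G1 e l ->
  [/\ #|T| = l + l + 1, l <= independence_number e & l <= clique_number e].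
Proof.
case=> f [[g fK gK] f_rel].
have g_inj : injective g := can_inj gK.
have g_rel p q : e (g p) (g q) = G1_rel p q by rewrite f_rel !gK.
have card_img (h : 'I_l -> G1_vertex l) : injective h -> #|[set g (h i) | i : 'I_l]| = l.
  by move=> h_inj; rewrite card_imset ?card_ord // => i j /g_inj /h_inj.
split.
- by rewrite (bij_eq_card (f := f)) ?card_G1_vertex //; exists g.
- rewrite -(card_img (fun i => Some (inr i))) => [|i j [] //]; apply: independent_card_le.
  by apply/independentP=> _ _ /imsetP[i _ ->] /imsetP[j _ ->]; rewrite g_rel.
- rewrite -(card_img (fun i => Some (inl i))) => [|i j [] //]; apply: clique_card_le.
  apply/cliqueP=> _ _ /imsetP[i _ ->] /imsetP[j _ ->]; rewrite g_rel /=.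
  by apply: contraNneq => ->.
Qed.

Section MaximalCritical.
Variables (T : finType) (e : rel T).
Hypotheses (e_sym : symmetric e) (e_irr : irreflexive e).
Hypothesis e_conn : connectedb e [set: T].
Hypothesis card_gt2 : 2 < #|T|.
Hypothesis no_cd_pair : forall a b, ~ cd_pair [set: T] e a b.
Hypothesis cd_pair_del : forall v, exists a b, cd_pair ([set: T] :\ v) e a b.
Hypothesis cd_pair_add : forall u v, u != v -> ~~ e u v ->
  exists a b, cd_pair [set: T] (add_edge e u v) a b.
Implicit Types (a b c d u v w x y : T).

Lemma not_dominating a b : adj_or_eq e a b -> ~ (forall x, dominates2 e a b x).
Proof. by move=> ab dom; apply: (no_cd_pair (a := a) (b := b)); split. Qed.

Lemma exists_neighbour v : exists x, e v x.
Proof.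
have /card_gt0P[x] : 0 < #|[set~ v]| by rewrite cardsC1; lia.
by rewrite !inE => /(connected_neighbour e_conn (in_setT v) (in_setT x)).
Qed.

Lemma del_dominating_edge v : exists a b,
  [/\ e a b, a != v, b != v, ~~ e a v & ~~ e b v] /\
  forall x, x != v -> dominates2 e a b x.
Proof.
have [a [b [+ + ab dom]]] := cd_pair_del v; rewrite !in_setD1 !in_setT !andbT => av bv.
have {}dom x : x != v -> dominates2 e a b x by move=> xv; apply: dom; rewrite in_setD1 xv in_setT.
have nadj c d : adj_or_eq e c d -> (forall x, x != v -> dominates2 e c d x) -> ~~ e c v.
  move=> cd domcd; apply/negP=> ecv; apply: (not_dominating cd) => x.
  by case: (eqVneq x v) => [->|/domcd//]; rewrite /dominates2 e_sym ecv !orbT.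
have nav := nadj a b ab dom.
have nbv : ~~ e b v by apply: (nadj b a) => [|x /dom]; rewrite (adj_or_eqC, dominates2C).
case/orP: ab => [/eqP ab | eab]; last by exists a, b.
(* a alone dominates G - v, so a and a neighbour of v would dominate G *)
subst b; exfalso; have [x evx] := exists_neighbour v.
have xv : x != v by apply: contraTneq evx => ->; rewrite e_irr.
have exa : e x a.
  by case/or4P: (dom x xv) => // /eqP xa; rewrite -xa e_sym evx in nav.
apply: (not_dominating (a := a) (b := x)); first by rewrite /adj_or_eq e_sym exa orbT.
move=> y; case: (eqVneq y v) => [->|/dom]; first by rewrite /dominates2 evx !orbT.
by rewrite /dominates2; case/or4P=> ->; rewrite ?orbT.
Qed.

Section IndependentClique.
Variables I K : {set T}.
Hypothesis I_indep : {in I &, forall x y, ~~ e x y}.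
Hypothesis K_clique : {in K &, forall x y, x != y -> e x y}.

Lemma notin_clique v x : v \in K -> x != v -> ~~ e x v -> x \notin K.
Proof. by move=> vK xv; apply: contra => xK; apply: K_clique. Qed.

Lemma indep_clique_meet x y : x \in I -> x \in K -> y \in I -> y \in K -> x = y.
Proof.
move=> xI xK yI yK; apply/eqP; apply: contraTT (I_indep xI yI).
by rewrite negbK; apply: K_clique.
Qed.

Lemma del_clique_edge v : v \in K -> exists a b,
  [/\ e a b, a \notin K, b \notin K, ~~ e a v & ~~ e b v] /\
  forall x, x != v -> dominates2 e a b x.
Proof.
move=> vK; have [a [b [[eab av bv nav nbv] dom]]] := del_dominating_edge v.
by exists a, b; split; rewrite ?(notin_clique vK).
Qed.

Lemma indep_clique_not_cover : ~ (forall x, (x \in I) || (x \in K)).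
Proof.
move=> cover; have [k kK] : exists k, k \in K.
  have /card_gt0P[v _] : 0 < #|T| by lia.
  have [x evx] := exists_neighbour v.
  case/orP: (cover v) => [vI|]; last by exists v.
  case/orP: (cover x) => [xI|]; last by exists x.
  by rewrite (negbTE (I_indep vI xI)) in evx.
have [a [b [[eab aK bK _ _] _]]] := del_clique_edge kK.
have inI c : c \notin K -> c \in I by have := cover c; case: (c \in K); rewrite ?orbF.
by rewrite (negbTE (I_indep (inI a aK) (inI b bK))) in eab.
Qed.

Lemma indep_clique_meet_not_cover w u : w \in I -> w \in K ->
  ~ (forall x, [|| x \in I, x \in K | x == u]).
Proof.
move=> wI wK cover; case: (boolP (e u w)) => [euw | nuw].
  have [a [b [[eab aK bK naw nbw] _]]] := del_clique_edge wK.
  have inI c : c \notin K -> ~~ e c w -> c \in I.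
    move=> cK ncw; case/or3P: (cover c) => // [cK'|/eqP cu]; first by rewrite cK' in cK.
    by rewrite cu euw in ncw.
  by rewrite (negbTE (I_indep (inI a aK naw) (inI b bK nbw))) in eab.
have [x ewx] := exists_neighbour w.
have xK : x \in K.
  case/or3P: (cover x) => // [xI|/eqP xu]; first by rewrite (negbTE (I_indep wI xI)) in ewx.
  by rewrite xu e_sym (negbTE nuw) in ewx.
have [a [b [[_ aK bK nax nbx] dom]]] := del_clique_edge xK.
have nwd d : d \notin K -> ~~ e w d.
  move=> dK; apply/negP=> ewd; case/or3P: (cover d) => [dI|dK'|/eqP du].
  - by rewrite (negbTE (I_indep wI dI)) in ewd.
  - by rewrite dK' in dK.
  - by rewrite du e_sym (negbTE nuw) in ewd.
have wx : w != x by apply: contraTneq ewx => ->; rewrite e_irr.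
move: (dom w wx); rewrite /dominates2 (negbTE (nwd a aK)) (negbTE (nwd b bK)) !orbF.
by case/orP=> /eqP wab; [rewrite -wab ewx in nax | rewrite -wab ewx in nbx].
Qed.

Lemma indep_clique_meet1 w : w \in I -> w \in K -> I :&: K = [set w].
Proof.
move=> wI wK; apply/setP=> x; rewrite !inE.
by apply/andP/eqP=> [[xI xK]|->] //; apply: indep_clique_meet.
Qed.

Lemma indep_clique_card : #|I| + #|K| < #|T|.
Proof.
rewrite -cardsUI -(cardsC (I :|: K)) ltn_add2l; set R := ~: (I :|: K).
have [IK0|[w]] := set_0Vmem (I :&: K).
  rewrite IK0 cards0 card_gt0; apply/negP=> /eqP R0; apply: indep_clique_not_cover => x.
  by have := setCU_cover x R0; rewrite inE orbF.
rewrite inE => /andP[wI wK]; rewrite (indep_clique_meet1 wI wK) cards1 ltnNge.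
apply/negP=> R_le1; have [u Ru] : exists u, R \subset [set u].
  have [R0|[u uR]] := set_0Vmem R; first by exists w; rewrite R0 sub0set.
  by exists u; apply/subsetP=> x xR; rewrite inE (card_le1_eqP R_le1 x u xR uR).
apply: (indep_clique_meet_not_cover wI wK (u := u)) => x.
have := setCU_cover x (erefl R); case: (boolP (x \in R)) => [/(subsetP Ru)|_].
  by rewrite inE => ->; rewrite !orbT.
by rewrite orbF => /orP[]->; rewrite ?orbT.
Qed.

Section DisjointCover.
Variable u : T.
Hypotheses (IK_disj : [disjoint I & K]) (uI : u \notin I) (uK : u \notin K).
Hypothesis cover : forall x, [|| x \in I, x \in K | x == u].

Lemma clique_partner v : v \in K -> exists z,
  [/\ z \in I, e u z, ~~ e z v, ~~ e u v & forall x, x != v -> dominates2 e u z x].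
Proof.
move=> vK; have [a [b [[eab aK bK nav nbv] dom]]] := del_clique_edge vK.
have inI c : c \notin K -> c != u -> c \in I.
  by move=> cK cu; have := cover c; rewrite (negbTE cK) (negbTE cu) !orbF.
have neq_u c d : e c d -> d != c by move=> ecd; apply: contraTneq ecd => ->; rewrite e_irr.
case: (eqVneq a u) => [au|au].
  by subst a; exists b; split=> //; apply: inI bK (neq_u _ _ eab).
case: (eqVneq b u) => [bu|bu].
  subst b; exists a; split=> //; [exact: inI aK au | by rewrite e_sym |].
  by move=> x /dom; rewrite dominates2C.
by rewrite (negbTE (I_indep (inI a aK au) (inI b bK bu))) in eab.
Qed.

Lemma u_nadj_clique v : v \in K -> ~~ e u v.
Proof. by case/clique_partner=> z []. Qed.

Lemma clique_adj_partner v k z : v \in K -> k \in K -> k != v -> z \in I ->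
  (forall x, x != v -> dominates2 e u z x) -> e k z.
Proof.
move=> vK kK kv zI /(_ k kv); rewrite /dominates2 e_sym (negbTE (u_nadj_clique kK)).
have -> : (k == u) = false by apply: contraNF uK => /eqP <-.
by have -> : (k == z) = false by apply: contraTF zI => /eqP <-; rewrite (disjointFl IK_disj).
Qed.

Lemma u_adj_indep x : 0 < #|K| -> x \in I -> e u x.
Proof.
case/card_gt0P=> v vK xI; have [z [zI euz _ _ dom]] := clique_partner vK.
have xv : x != v by apply: contraTneq xI => ->; rewrite (disjointFl IK_disj).
move: (dom x xv); rewrite /dominates2 (negbTE (I_indep xI zI)) orbF e_sym.
have -> : (x == u) = false by apply: contraNF uI => /eqP <-.
by rewrite /= => /orP[/eqP->|].
Qed.

Lemma disjoint_cover_G1 : #|T| = #|K| + #|K| + 1 -> in_G1 e #|K|.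
Proof.
move=> cardT; have K_gt0 : 0 < #|K| by lia.
pose q (i : 'I_#|K|) : T := enum_val i.
have qK i : q i \in K := enum_valP i.
have [z zP] := fin_all_exists (fun i => clique_partner (qK i)).
have zI i : z i \in I by case: (zP i).
have qz i j : e (q j) (z i) = (i != j).
  case: eqVneq => [<-|ij]; first by case: (zP i) => _ _ + _ _; rewrite e_sym => /negbTE.
  case: (zP i) => _ _ _ _; apply: clique_adj_partner; rewrite ?qK //.
  by rewrite (inj_eq enum_val_inj) eq_sym.
have z_inj : injective z.
  by move=> i j zij; apply/eqP; rewrite -[_ == _]negbK -qz zij qz eqxx.
have notIK i j : z i != q j by apply: contraTneq (zI i) => ->; rewrite (disjointFl IK_disj) ?qK.
(* q i, z i and u play the roles of q_i, z_i and v in G_1. *)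
pose g p := match p with None => u | Some (inl i) => q i | Some (inr i) => z i end.
apply: (in_G1_labelling (g := g)) cardT _ => [[[i|i]|] [[j|j]|] //= gij|[[i|i]|] [[j|j]|] /=].
- by rewrite (enum_val_inj gij).
- by have := notIK j i; rewrite gij eqxx.
- by move: uK; rewrite -gij qK.
- by have := notIK i j; rewrite gij eqxx.
- by rewrite (z_inj _ _ gij).
- by move: uI; rewrite -gij zI.
- by move: uK; rewrite gij qK.
- by move: uI; rewrite gij zI.
- case: eqVneq => [->|ij]; first by rewrite e_irr.
  by rewrite K_clique ?qK // (inj_eq enum_val_inj).
- exact: qz.
- by apply/negbTE; rewrite e_sym u_nadj_clique.
- by rewrite e_sym qz.
- by apply/negbTE/I_indep.
- by rewrite e_sym u_adj_indep.
- by apply/negbTE/u_nadj_clique.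
- by rewrite u_adj_indep.
- by rewrite e_irr.
Qed.

End DisjointCover.

Lemma disjoint_indep_clique_G1 : [disjoint I & K] -> #|I| = #|K| ->
  #|T| = #|K| + #|K| + 1 -> in_G1 e #|K|.
Proof.
move=> IK_disj cardI cardT.
have /cards1P[u rest] : #|~: (I :|: K)| == 1.
  by have := cardsC (I :|: K); rewrite cardsU (disjoint_setI0 IK_disj) cards0; lia.
have : u \in ~: (I :|: K) by rewrite rest set11.
rewrite !inE negb_or => /andP[uI uK].
apply: (disjoint_cover_G1 (u := u)) => // x.
by have := setCU_cover x rest; rewrite inE.
Qed.

Section OverlapCover.
Variables w u1 u2 c : T.
Hypotheses (wI : w \in I) (wK : w \in K) (u12 : u1 != u2).
Hypotheses (u1I : u1 \notin I) (u1K : u1 \notin K) (u2I : u2 \notin I) (u2K : u2 \notin K).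
Hypothesis cover : forall x, [|| x \in I, x \in K, x == u1 | x == u2].
Hypothesis K_gt1 : 1 < #|K|.
(* [u2, c] is the dominating edge of G - w given by [del_clique_edge]: one of
   its ends is outside I, hence is u1 or u2, and is called u2. *)
Hypotheses (e_u2c : e u2 c) (nadj_u2w : ~~ e u2 w) (nadj_cw : ~~ e c w).
Hypothesis dom_w : forall x, x != w -> dominates2 e u2 c x.

Lemma u1_adj_w_nadj_clique v : v \in K -> v != w -> e w u1 && ~~ e u1 v.
Proof.
move=> vK vw; have [a [b [[_ aK bK nav nbv] dom]]] := del_clique_edge vK.
have ewv : e w v by rewrite K_clique // eq_sym.
have is_u1 d : d \notin K -> ~~ e d v -> e w d -> d = u1.
  move=> dK ndv ewd; case/or4P: (cover d) => [dI|dK'|/eqP //|/eqP du2].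
  - by rewrite (negbTE (I_indep wI dI)) in ewd.
  - by rewrite dK' in dK.
  - by rewrite du2 e_sym (negbTE nadj_u2w) in ewd.
have wv : w != v by rewrite eq_sym.
case/or4P: (dom w wv) => [/eqP wa|/eqP wb|ewa|ewb].
- by rewrite -wa ewv in nav.
- by rewrite -wb ewv in nbv.
- by rewrite -(is_u1 a aK nav ewa) ewa nav.
- by rewrite -(is_u1 b bK nbv ewb) ewb nbv.
Qed.

Lemma u1_adj_w : e w u1.
Proof.
have /card_gt0P[v] : 0 < #|K :\ w| by move: K_gt1; rewrite (cardsD1 w K) wK add1n ltnS.
by rewrite !inE => /andP[vw vK]; case/andP: (u1_adj_w_nadj_clique vK vw).
Qed.

Lemma u1_nadj_clique v : v \in K -> v != w -> ~~ e u1 v.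
Proof. by move=> vK vw; case/andP: (u1_adj_w_nadj_clique vK vw). Qed.

Lemma c_in_I : c \in I.
Proof.
case/or4P: (cover c) => [//|cK|/eqP cu1|/eqP cu2].
- have cw : c != w by apply: contraTneq e_u2c => ->.
  by move: (notin_clique wK cw nadj_cw); rewrite cK.
- by move: nadj_cw; rewrite cu1 e_sym u1_adj_w.
- by move: e_u2c; rewrite cu2 e_irr.
Qed.

Lemma indep_adj_u2 x : x \in I -> x != w -> e x u2.
Proof.
move=> xI /dom_w; rewrite /dominates2 (negbTE (I_indep xI c_in_I)) orbF.
have -> : (x == u2) = false by apply: contraNF u2I => /eqP <-.
by rewrite /= => /orP[/eqP->|]; rewrite // e_sym.
Qed.

Lemma del_clique_edge_u12 v : v \in K -> v != w -> {in I, forall x, x != w -> e x v} ->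
  e u1 u2 /\ forall x, x != v -> dominates2 e u1 u2 x.
Proof.
move=> vK vw Iv; have [a [b [[eab aK bK nav nbv] dom]]] := del_clique_edge vK.
have in12 d : d \notin K -> ~~ e d v -> (d == u1) || (d == u2).
  move=> dK ndv; case/or4P: (cover d) => [dI|dK'|->|->]; rewrite ?orbT //; last first.
    by rewrite dK' in dK.
  have dw : d != w by apply: contraNneq dK => ->.
  by rewrite Iv in ndv.
have ab : a != b by apply: contraTneq eab => ->; rewrite e_irr.
move: (in12 a aK nav) (in12 b bK nbv) ab eab dom.
case/orP=> /eqP-> /orP[]/eqP-> //; rewrite ?eqxx // => _ e12 dom; split; rewrite 1?e_sym //.
by move=> x /dom; rewrite dominates2C.
Qed.

Lemma dominating_w_adj b x : b \in K -> b != w -> x \in I -> x != w ->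
  dominates2 e w b x -> e x b.
Proof.
move=> bK bw xI xw; rewrite /dominates2 (negbTE xw) (negbTE (I_indep xI wI)) /=.
case: eqVneq => [xb|_] //=; move: bK bw; rewrite -xb => xK.
by rewrite (indep_clique_meet xI xK wI wK) eqxx.
Qed.

Lemma indep_u2_not_dominating d : d \in I -> e d u2 -> ~~ dominates2 e d u2 w.
Proof.
move=> dI edu2; have dw : d != w by apply: contraTneq edu2 => ->; rewrite e_sym.
have wu2 : w != u2 by apply: contraNneq u2K => <-.
rewrite /dominates2 eq_sym (negbTE dw) (negbTE wu2) (negbTE (I_indep wI dI)).
by rewrite e_sym (negbTE nadj_u2w).
Qed.

Lemma indep_not_dominating_but_u2 d b : d \in I -> d != w -> adj_or_eq e d b ->
  ~ (forall x, x != u2 -> dominates2 e d b x).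
Proof.
move=> dI dw db dom; apply: (not_dominating db) => x.
case: (eqVneq x u2) => [->|/dom//]; by rewrite /dominates2 e_sym (indep_adj_u2 dI dw) !orbT.
Qed.

Section NonEdge.
Variable k : T.
Hypotheses (kK : k \in K) (kw : k != w) (nadj_u2k : ~~ e u2 k).

Lemma u2_neq_k : u2 != k.
Proof. by apply: contraNneq u2K => ->. Qed.

Lemma add_edge_pair_near_u1 d t : ~~ e u1 u2 ->
  cd_pair [set: T] (add_edge e u2 k) d t -> (d == u1) || e u1 d -> False.
Proof.
move=> n12 [_ _ + dom'] d1.
have du2 : d != u2 by apply: contraTneq d1 => ->; rewrite eq_sym (negbTE u12) (negbTE n12).
have dk : d != k.
  apply: contraTneq d1 => ->; rewrite (negbTE (u1_nadj_clique kK kw)) orbF.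
  by apply: contraNneq u1K => <-.
rewrite adj_or_eq_add_edge // => dt.
have {dom'} dom x : dominates2 e d t x || [|| (t == k) && (x == u2) | (t == u2) && (x == k)].
  by rewrite -dominates2_add_edge ?dom'.
have dI : (d == u1) || (d \in I).
  case/or4P: (cover d) => [->|dK|->//|/eqP du]; rewrite ?orbT //; last by rewrite du eqxx in du2.
  case: (eqVneq d w) => [->|dw]; first by rewrite wI orbT.
  by move: d1; rewrite (negbTE (u1_nadj_clique dK dw)) orbF => ->.
move: dt dom; case: (eqVneq t u2) => [->|_]; [|case: (eqVneq t k) => [->|_]] => dt dom.
- have edu2 : e d u2 by rewrite /adj_or_eq (negbTE du2) in dt.
  have dI' : d \in I by case/orP: dI => // /eqP du1; rewrite du1 (negbTE n12) in edu2.
  have := dom w; rewrite (negbTE (indep_u2_not_dominating dI' edu2)) (negbTE u2_neq_k) /=.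
  by rewrite eq_sym (negbTE kw).
- have edk : e d k by rewrite /adj_or_eq (negbTE dk) in dt.
  have dI' : d \in I.
    by case/orP: dI => // /eqP du1; rewrite du1 (negbTE (u1_nadj_clique kK kw)) in edk.
  have dom_k x : x != u2 -> dominates2 e d k x.
    by move=> xu2; have := dom x; rewrite (negbTE xu2) /= !orbF.
  case: (eqVneq d w) => [dw|dw]; last exact: (indep_not_dominating_but_u2 dI' dw dt dom_k).
  subst d; apply: (negP n12); apply: (proj1 (del_clique_edge_u12 kK kw _)) => x xI xw.
  apply: (dominating_w_adj kK kw xI xw); apply: dom_k.
  by apply: contraNneq u2I => <-.
- apply: (not_dominating dt) => x.
  by have := dom x; rewrite /= !orbF.
Qed.

Lemma u1_adj_u2 : e u1 u2.
Proof.
apply/negPn/negP => n12; have [a [b ab]] := cd_pair_add u2_neq_k nadj_u2k.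
have ba := cd_pairC (add_edge_sym u2 k e_sym) ab.
have u1k : u1 != k by apply: contraNneq u1K => ->.
have [_ _ _ /(_ u1 (in_setT u1))] := ab.
rewrite /dominates2 /add_edge /= (negbTE u12) (negbTE u1k) /= !orbF.
case/or4P=> [ua|ub|ua|ub].
- by apply: (add_edge_pair_near_u1 n12 ab); rewrite eq_sym ua.
- by apply: (add_edge_pair_near_u1 n12 ba); rewrite eq_sym ub.
- by apply: (add_edge_pair_near_u1 n12 ab); rewrite ua orbT.
- by apply: (add_edge_pair_near_u1 n12 ba); rewrite ub orbT.
Qed.

End NonEdge.

Lemma u2_dominating_edge : e u1 u2 -> exists b,
  [/\ b \in K, b != w, ~~ e b u2 & forall x, x != u2 -> dominates2 e w b x].
Proof.
move=> e12; have [a [b [[eab au2 bu2 na nb] dom]]] := del_dominating_edge u2.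
have inK d : d != u2 -> ~~ e d u2 -> d \in K.
  move=> du2 nd; case/or4P: (cover d) => [dI|//|/eqP du1|/eqP du2'].
  - by case: (eqVneq d w) => [->//|dw]; rewrite indep_adj_u2 in nd.
  - by rewrite du1 e12 in nd.
  - by rewrite du2' eqxx in du2.
have isw d : d \in K -> (u1 == d) || e u1 d -> d = w.
  move=> dK /orP[/eqP u1d|]; first by move: u1K; rewrite u1d dK.
  by apply: contraTeq => dw; apply: u1_nadj_clique.
have ab : a != b by apply: contraTneq eab => ->; rewrite e_irr.
have [aw|bw] : a = w \/ b = w.
  by case/or4P: (dom u1 u12) => h; [left|right|left|right]; apply: isw; rewrite ?inK ?h ?orbT.
- by exists b; split=> //; [exact: inK | rewrite -aw eq_sym | rewrite -aw].
- exists a; split=> //; [exact: inK | by rewrite -bw |].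
  by move=> x /dom; rewrite -bw dominates2C.
Qed.

Lemma clique_sub_pair b : e u1 u2 -> b \in K -> b != w ->
  (forall x, x != u2 -> dominates2 e w b x) -> K \subset [set w; b].
Proof.
move=> e12 bK bw dom; have [_ dom12] : e u1 u2 /\ forall x, x != b -> dominates2 e u1 u2 x.
  apply: del_clique_edge_u12 => // x xI xw; apply: (dominating_w_adj bK bw xI xw).
  by apply: dom; apply: contraNneq u2I => <-.
apply/subsetP=> k kK; rewrite !inE; apply/norP=> -[kw kb].
have eku2 : e k u2.
  have ku1 : (k == u1) = false by apply: contraNF u1K => /eqP <-.
  have ku2 : (k == u2) = false by apply: contraNF u2K => /eqP <-.
  by move: (dom12 k kb); rewrite /dominates2 ku1 ku2 e_sym (negbTE (u1_nadj_clique kK kw)).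
apply: (not_dominating (a := u2) (b := k)); first by rewrite /adj_or_eq e_sym eku2 orbT.
move=> x; rewrite /dominates2; case/or4P: (cover x) => [xI|xK|/eqP->|->]; rewrite ?orbT //.
- case: (eqVneq x w) => [->|xw]; last by rewrite indep_adj_u2 ?orbT.
  by rewrite (K_clique wK kK) ?orbT // eq_sym.
- by case: (eqVneq x k) => [->|xk]; rewrite ?eqxx ?(K_clique xK kK xk) ?orbT.
- by rewrite e12 !orbT.
Qed.

Lemma exists_disjoint_clique : exists K' : {set T},
  [/\ {in K' &, forall x y, x != y -> e x y}, #|K'| = #|K| & [disjoint I & K']].
Proof.
have KwI x : x \in K -> x != w -> x \notin I.
  by move=> xK; apply: contraNN => xI; rewrite (indep_clique_meet xI xK wI wK).
case: (boolP [forall x in (K :\ w), e u2 x]) => [/forall_inP u2K'|].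
  exists (u2 |: K :\ w); split.
  - move=> x y; rewrite !inE => /orP[/eqP->|/andP[xw xK]] /orP[/eqP->|/andP[yw yK]];
      rewrite ?eqxx // => xy.
    + by apply: u2K'; rewrite !inE yw.
    + by rewrite e_sym u2K' // !inE xw.
    + exact: K_clique.
  - by rewrite cardsU1 !inE negb_and u2K orbT (cardsD1 w K) wK.
  - rewrite disjoint_sym disjoints_subset; apply/subsetP=> x.
    by rewrite !inE => /orP[/eqP->//|/andP[xw xK]]; apply: KwI.
rewrite negb_forall_in => /exists_inP[k]; rewrite !inE => /andP[kw kK] nu2k.
have e12 := u1_adj_u2 kK kw nu2k.
have [b [bK bw _ dom]] := u2_dominating_edge e12.
have cardK : #|K| = 2.
  apply/eqP; rewrite eqn_leq K_gt1 andbT.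
  apply: leq_trans (subset_leq_card (clique_sub_pair e12 bK bw dom)) _.
  by rewrite cards2; case: (w != b).
exists [set u1; u2]; split.
- by move=> x y; rewrite !inE => /orP[]/eqP-> /orP[]/eqP->; rewrite ?eqxx // e_sym.
- by rewrite cards2 u12 cardK.
- rewrite disjoint_sym disjoints_subset; apply/subsetP=> x.
  by rewrite !inE => /orP[]/eqP->.
Qed.

End OverlapCover.

Lemma overlap_disjoint_clique w : w \in I -> w \in K -> 1 < #|K| -> #|I| = #|K| ->
  #|T| = #|K| + #|K| + 1 -> exists K' : {set T},
  [/\ {in K' &, forall x y, x != y -> e x y}, #|K'| = #|K| & [disjoint I & K']].
Proof.
move=> wI wK K_gt1 cardI cardT.
have /cards2P[u1 [u2 [u12 rest]]] : #|~: (I :|: K)| == 2.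
  by have := cardsC (I :|: K); rewrite cardsU (indep_clique_meet1 wI wK) cards1; lia.
have out x : x \in [set u1; u2] -> (x \notin I) && (x \notin K) by rewrite -rest !inE negb_or.
have /andP[u1I u1K] := out u1 (set21 u1 u2).
have /andP[u2I u2K] := out u2 (set22 u1 u2).
have cover x : [|| x \in I, x \in K, x == u1 | x == u2].
  by have := setCU_cover x rest; rewrite !inE.
have [a [b [[eab aK bK naw nbw] dom]]] := del_clique_edge wK.
wlog aI : a b eab aK bK naw nbw dom / a \notin I.
  move=> hwlog; case: (boolP (a \in I)) => aI; last exact: (hwlog a b).
  apply: (hwlog b a) => //; first by rewrite e_sym.
    by move=> x /dom; rewrite dominates2C.
  by apply/negP=> bI; rewrite (negbTE (I_indep aI bI)) in eab.
case/or4P: (cover a) => [aI'|aK'|/eqP au1|/eqP au2].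
- by rewrite aI' in aI.
- by rewrite aK' in aK.
- subst a; apply: (exists_disjoint_clique (w := w) (u1 := u2) (u2 := u1) (c := b)) => //.
  + by rewrite eq_sym.
  + by move=> x; case/or4P: (cover x) => ->; rewrite ?orbT.
- by subst a; apply: (exists_disjoint_clique (w := w) (u1 := u1) (u2 := u2) (c := b)).
Qed.

End IndependentClique.

Lemma independence_clique_lt : independence_number e + clique_number e < #|T|.
Proof.
have [I0 /independentP I0_indep <-] := max_independent_set e.
have [K0 /cliqueP K0_clique <-] := max_clique e.
exact: indep_clique_card.
Qed.

Lemma independence_number_gt1 : 1 < independence_number e.
Proof.
rewrite ltnNge; apply/negP=> alpha_le1.
have adj x y : x != y -> e x y.
  move=> xy; apply: contraT => nxy.
  have ind : independentb e [set x; y].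
    apply/independentP=> a b; rewrite !inE => /orP[]/eqP-> /orP[]/eqP->;
      by rewrite ?e_irr // e_sym.
  by have := leq_trans (independent_card_le ind) alpha_le1; rewrite cards2 xy.
have /card_gt0P[v _] : 0 < #|T| by lia.
apply: (not_dominating (a := v) (b := v)); first by rewrite /adj_or_eq eqxx.
by move=> x; rewrite /dominates2; case: (eqVneq x v) => [|/adj->]; rewrite ?orbT.
Qed.

Lemma extremal_in_G1 : independence_number e = clique_number e ->
  #|T| = clique_number e + clique_number e + 1 -> in_G1 e (clique_number e).
Proof.
move: independence_number_gt1.
have [I0 /independentP I0_indep <-] := max_independent_set e.
have [K0 /cliqueP K0_clique <-] := max_clique e.
move=> I0_gt1 cardI0 cardT; have K0_gt1 : 1 < #|K0| by rewrite -cardI0.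
case: (boolP [disjoint I0 & K0]) => [|/pred0Pn[w /andP[wI wK]]].
  by move=> disj; apply: (disjoint_indep_clique_G1 I0_indep K0_clique).
have [K' [K'_clique cardK' disjK']] :=
  overlap_disjoint_clique I0_indep K0_clique wI wK K0_gt1 cardI0 cardT.
rewrite -cardK'; apply: (disjoint_indep_clique_G1 I0_indep K'_clique) => //; by rewrite cardK'.
Qed.

End MaximalCritical.

Lemma maximal_3_critical_cd_pairs (T : finType) (e : rel T) :
  simple_graph e -> maximal_vertex_critical [set: T] e 3 ->
  [/\ 2 < #|T|, forall a b, ~ cd_pair [set: T] e a b,
      forall v, exists a b, cd_pair ([set: T] :\ v) e a b &
      forall u v, u != v -> ~~ e u v -> exists a b, cd_pair [set: T] (add_edge e u v) a b].
Proof.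
move=> [e_sym e_irr] [[gamma3 edge_crit] [[card_gt2 _] [_ vertex_crit]]].
rewrite cardsT in card_gt2; have T_gt1 : 1 < #|T| by lia.
have setT0 : [set: T] != set0 by rewrite -card_gt0 cardsT; lia.
split=> // [a b ab | v | u v uv nuv].
- have := (gamma_c_lt3P e_sym e_irr T_gt1 setT0).2 (ex_intro _ a (ex_intro _ b ab)).
  by rewrite gamma3.
- apply/(gamma_c_lt3P e_sym e_irr T_gt1); last exact/vertex_crit/in_setT.
  by rewrite -card_gt0; have := cardsD1 v [set: T]; rewrite in_setT cardsT add1n; lia.
- apply/(gamma_c_lt3P (add_edge_sym u v e_sym) (add_edge_irr e_irr uv) T_gt1 setT0).
  exact: edge_crit.
Qed.

Theorem corollary3p7 (T : finType) (e : rel T) :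
  simple_graph e ->
  connectedb e [set: T] ->
  maximal_vertex_critical [set: T] e 3 ->
  let n := #|T| in
  let alpha := independence_number e in
  let omega := clique_number e in
  alpha * omega <= (n.-1)./2 * uphalf n.-1 /\
  (4 * (alpha * omega) = (n.-1) ^ 2 <-> exists l, 2 <= l /\ in_G1 e l).
Proof.
move=> e_simple e_conn /(maximal_3_critical_cd_pairs e_simple)[card_gt2 no_pair del add].
have [e_sym e_irr] := e_simple; move=> n alpha omega.
have sum_lt : alpha + omega < n by apply: independence_clique_lt.
have sum_le : alpha + omega <= n.-1 by lia.
split; first exact: mul_le_half_uphalf.
split=> [/(four_mul_eq_sqr sum_le)[alpha_omega n_eq] | [l [_ /in_G1_indep_clique[]]]].
- have alpha_gt1 : 1 < alpha by apply: independence_number_gt1.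
  exists omega; split; first by rewrite -alpha_omega.
  by apply: extremal_in_G1 => //; rewrite /n in n_eq; lia.
- rewrite -/n => cardT l_alpha l_omega; have [-> ->] : alpha = l /\ omega = l by lia.
  by rewrite cardT addn1 /=; nia.
Qed.
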